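(* Let $p,q\ge 2$ be relatively prime integers, and for relatively prime positive integers $a,b$ with $b\ge2$ put $$T(a,b)=\sum_{n=1}^{b-1}\frac{\cot(\pi na/b)\cot(\pi n/b)}{\sin^2(\pi n/b)}.$$ Then $$45p\,T(p,q)+45q\,T(q,p)=p^4+q^4-5p^2q^2+3.$$ *)

From Stdlib Require Import Reals Lra Lia Arith List.
Open Scope R_scope.

Definition cot (x : R) : R := cos x / sin x.

Definition T (a b : nat) : R :=
  fold_right Rplus 0
    (map (fun n : nat =>
            cot (PI * INR n * INR a / INR b) * cot (PI * INR n / INR b)
            / (sin (PI * INR n / INR b)) ^ 2)
         (seq 1 (b - 1))).

From Stdlib Require Import Reals Lra Lia Arith List.
From Coquelicot Require Import Complex.
Open Scope R_scope.

(* Put cs(t) = cot t / sin^2 t, so that T(a,b) = sum_n cot(pi n a/b) cs(pi n/b).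
   By the multiplication formula sum_{j<p} cot(x + pi j/p) = p cot(p x), proved with
   p-th roots of unity, each term p cot(p x) cs(x) at x = pi n/q splits into
   cot^2 x + cot^4 x plus cross terms cot(x + pi m/p) cs(x).  Doing the same for
   q T(q,p) and pairing the cross terms by the addition formula
   cot(a+b) (cs a + cs b) = P(cot a, cot b), with P an explicit quartic, leaves only
   sums of polynomials in cot(pi n/q) and cot(pi m/p).  Odd power sums vanish
   (n -> q - n), and the sums of cot^2 and cot^4 follow from the same reciprocity at
   q = p + 1, where it becomes a recurrence in p. *)

Definition rsum (f : nat -> R) (l : list nat) : R := fold_right Rplus 0 (map f l).

Lemma rsum_app f l1 l2 : rsum f (l1 ++ l2) = rsum f l1 + rsum f l2.
Proof. unfold rsum; induction l1 as [|a l1 IH]; simpl; [ring | rewrite IH; ring]. Qed.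

Lemma rsum_ext f g l : (forall x, In x l -> f x = g x) -> rsum f l = rsum g l.
Proof.
  unfold rsum; induction l as [|a l IH]; simpl; intros H; auto.
  rewrite H, IH; auto.
Qed.

Lemma rsum_plus f g l : rsum (fun x => f x + g x) l = rsum f l + rsum g l.
Proof. unfold rsum; induction l as [|a l IH]; simpl; [ring | rewrite IH; ring]. Qed.

Lemma rsum_scal c f l : rsum (fun x => c * f x) l = c * rsum f l.
Proof. unfold rsum; induction l as [|a l IH]; simpl; [ring | rewrite IH; ring]. Qed.

Lemma rsum_const c l : rsum (fun _ => c) l = INR (length l) * c.
Proof.
  unfold rsum; induction l as [|a l IH]; simpl length; [simpl; ring |].
  rewrite S_INR; simpl; rewrite IH; ring.
Qed.

Lemma rsum_swap (f : nat -> nat -> R) l1 l2 :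
  rsum (fun a => rsum (f a) l2) l1 = rsum (fun b => rsum (fun a => f a b) l1) l2.
Proof.
  induction l1 as [|a l1 IH].
  - change (0 = rsum (fun _ => 0) l2); rewrite rsum_const; ring.
  - change (rsum (f a) l2 + rsum (fun a => rsum (f a) l2) l1 =
            rsum (fun b => f a b + rsum (fun a => f a b) l1) l2).
    rewrite rsum_plus, IH; reflexivity.
Qed.

Lemma rsum_seq_reflect (h : nat -> R) c : forall k a, (a + k <= c + 1)%nat ->
  rsum (fun i => h (c - i)%nat) (seq a k) = rsum h (seq (c + 1 - a - k) k).
Proof.
  induction k as [|k IH]; intros a Hk; [reflexivity |].
  rewrite (seq_S k (c + 1 - a - S k)), rsum_app.
  change (h (c - a)%nat + rsum (fun i => h (c - i)%nat) (seq (S a) k) =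
          rsum h (seq (c + 1 - a - S k) k) + (h (c + 1 - a - S k + k)%nat + 0)).
  rewrite IH by lia.
  replace (c + 1 - S a - k)%nat with (c + 1 - a - S k)%nat by lia.
  replace (c + 1 - a - S k + k)%nat with (c - a)%nat by lia.
  ring.
Qed.

Lemma seq_0_cons n : (1 <= n)%nat -> seq 0 n = 0%nat :: seq 1 (n - 1).
Proof. intros Hn; destruct n as [|n]; [lia | simpl; rewrite Nat.sub_0_r; reflexivity]. Qed.

Lemma cot_add_INR_PI t n : cot (t + INR n * PI) = cot t.
Proof.
  induction n as [|n IH]; [simpl; rewrite Rmult_0_l, Rplus_0_r; reflexivity |].
  rewrite S_INR, Rmult_plus_distr_r, Rmult_1_l, <- Rplus_assoc.
  unfold cot in *; rewrite neg_sin, neg_cos, <- IH.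
  unfold Rdiv; rewrite Rinv_opp; ring.
Qed.

Lemma cot_opp t : cot (- t) = - cot t.
Proof. unfold cot; rewrite sin_neg, cos_neg; unfold Rdiv; rewrite Rinv_opp; ring. Qed.

Lemma sin_PI_frac_neq0 a b : (0 < b)%nat -> ~ Nat.divide b a ->
  sin (PI * INR a / INR b) <> 0.
Proof.
  intros Hb Hndiv Hsin; apply Hndiv.
  apply sin_eq_0_0 in Hsin as [k Hk].
  assert (Hb' : INR b <> 0) by (apply not_0_INR; lia).
  assert (Ha : INR a = IZR k * INR b).
  { apply Rmult_eq_reg_l with PI; [| apply PI_neq0].
    replace (PI * INR a) with (PI * INR a / INR b * INR b) by (field; auto).
    rewrite Hk; ring. }
  rewrite !INR_IZR_INZ, <- mult_IZR in Ha; apply eq_IZR in Ha.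
  exists (Z.to_nat k); lia.
Qed.
Lemma not_divide_lt a b : (0 < a < b)%nat -> ~ Nat.divide b a.
Proof. intros H [c Hc]; destruct c; lia. Qed.

Lemma sin_PI_frac_lt_neq0 n q : (0 < n < q)%nat -> sin (PI * INR n / INR q) <> 0.
Proof. intros H; apply sin_PI_frac_neq0, not_divide_lt; lia. Qed.

Lemma sin_mul_PI_frac_neq0 p q n : Nat.gcd p q = 1%nat -> (0 < n < q)%nat ->
  sin (INR p * (PI * INR n / INR q)) <> 0.
Proof.
  intros Hpq Hn.
  replace (INR p * (PI * INR n / INR q)) with (PI * INR (p * n) / INR q)
    by (rewrite mult_INR; field; apply not_0_INR; lia).
  apply sin_PI_frac_neq0; [lia |].
  intros Hdiv; apply Nat.gauss in Hdiv; [| rewrite Nat.gcd_comm; exact Hpq].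
  exact (not_divide_lt n q Hn Hdiv).
Qed.

Lemma sin_add_PI_frac_neq0 p q n m : (1 <= p)%nat -> Nat.gcd p q = 1%nat ->
  (0 < n < q)%nat -> (m < p)%nat ->
  sin (PI * INR n / INR q + PI * INR m / INR p) <> 0.
Proof.
  intros Hp Hpq Hn Hm.
  replace (PI * INR n / INR q + PI * INR m / INR p)
    with (PI * INR (n * p + m * q) / INR (q * p))
    by (rewrite plus_INR, !mult_INR; field; split; apply not_0_INR; lia).
  apply sin_PI_frac_neq0; [nia |].
  intros [c Hc].
  assert (Hdiv : Nat.divide q (p * n)) by (exists (c * p - m)%nat; nia).
  apply Nat.gauss in Hdiv; [| rewrite Nat.gcd_comm; exact Hpq].
  exact (not_divide_lt n q Hn Hdiv).
Qed.

Section CotangentMultiplication.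
Local Open Scope C_scope.

Definition csum (f : nat -> C) (l : list nat) : C := fold_right Cplus 0 (map f l).

Lemma csum_app f l1 l2 : csum f (l1 ++ l2) = csum f l1 + csum f l2.
Proof. unfold csum; induction l1 as [|a l1 IH]; simpl; [ring | rewrite IH; ring]. Qed.

Lemma csum_ext f g l : (forall x, In x l -> f x = g x) -> csum f l = csum g l.
Proof.
  unfold csum; induction l as [|a l IH]; simpl; intros H; auto.
  rewrite H, IH; auto.
Qed.

Lemma csum_plus f g l : csum (fun x => f x + g x) l = csum f l + csum g l.
Proof. unfold csum; induction l as [|a l IH]; simpl; [ring | rewrite IH; ring]. Qed.

Lemma csum_scal c f l : csum (fun x => c * f x) l = c * csum f l.
Proof. unfold csum; induction l as [|a l IH]; simpl; [ring | rewrite IH; ring]. Qed.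

Lemma csum_const c l : csum (fun _ => c) l = INR (length l) * c.
Proof.
  unfold csum; induction l as [|a l IH]; simpl length; [simpl; ring |].
  rewrite S_INR, RtoC_plus; simpl; rewrite IH; ring.
Qed.

Lemma csum_swap (f : nat -> nat -> C) l1 l2 :
  csum (fun a => csum (f a) l2) l1 = csum (fun b => csum (fun a => f a b) l1) l2.
Proof.
  induction l1 as [|a l1 IH].
  - change (RtoC 0 = csum (fun _ => RtoC 0) l2); rewrite csum_const; ring.
  - change (csum (f a) l2 + csum (fun a => csum (f a) l2) l1 =
            csum (fun b => f a b + csum (fun a => f a b) l1) l2).
    rewrite csum_plus, IH; reflexivity.
Qed.

Lemma RtoC_rsum f l : RtoC (rsum f l) = csum (fun x => RtoC (f x)) l.
Proof.
  unfold rsum, csum; induction l as [|a l IH]; simpl; auto.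
  rewrite RtoC_plus, IH; reflexivity.
Qed.

Lemma geom_sum z n : (1 - z) * csum (Cpow z) (seq 0 n) = 1 - z ^ n.
Proof.
  induction n as [|n IH]; [unfold csum; simpl; ring |].
  rewrite seq_S, csum_app, Cmult_plus_distr_l, IH.
  unfold csum; simpl; ring.
Qed.

Lemma geom_sum_root_of_unity z n : z ^ n = 1 -> 1 - z <> 0 ->
  csum (Cpow z) (seq 0 n) = 0.
Proof.
  intros Hzn Hz.
  assert (H := geom_sum z n); rewrite Hzn in H; replace (RtoC 1 - RtoC 1) with (RtoC 0) in H by ring.
  replace (csum (Cpow z) (seq 0 n)) with (/ (1 - z) * ((1 - z) * csum (Cpow z) (seq 0 n)))
    by (field; exact Hz).
  rewrite H; ring.
Qed.

Lemma inv_one_sub_geom_sum z w n : z ^ n = w -> 1 - w <> 0 ->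
  1 / (1 - z) = / (1 - w) * csum (Cpow z) (seq 0 n).
Proof.
  intros Hzn Hw.
  assert (Hgeom := geom_sum z n); rewrite Hzn in Hgeom.
  assert (Hz : 1 - z <> 0).
  { intros Hz; apply Hw; rewrite <- Hgeom, Hz; ring. }
  assert (Hs : csum (Cpow z) (seq 0 n) <> 0).
  { intros Hs; apply Hw; rewrite <- Hgeom, Hs; ring. }
  rewrite <- Hgeom; field; split; assumption.
Qed.

Definition cis (t : R) : C := (cos t, sin t).

Lemma cis_add s t : cis (s + t) = cis s * cis t.
Proof. unfold cis, Cmult; simpl; rewrite cos_plus, sin_plus; f_equal; ring. Qed.

Lemma cis_0 : cis 0 = 1.
Proof. unfold cis; rewrite cos_0, sin_0; reflexivity. Qed.

Lemma cis_pow t n : cis t ^ n = cis (INR n * t).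
Proof.
  induction n as [|n IH]; [simpl; rewrite Rmult_0_l, cis_0; reflexivity |].
  simpl Cpow; rewrite IH, <- cis_add, S_INR; f_equal; ring.
Qed.

Lemma cis_period t k : cis (t + 2 * INR k * PI) = cis t.
Proof. unfold cis; rewrite cos_period, sin_period; reflexivity. Qed.

Lemma one_sub_cis_neq0 y : sin y <> 0%R -> 1 - cis (2 * y) <> 0.
Proof.
  intros H E; apply (f_equal fst) in E; simpl in E.
  rewrite cos_2a_sin in E; apply H; nra.
Qed.

Lemma cot_cis y : sin y <> 0%R -> RtoC (cot y) = Ci * (1 - 2 / (1 - cis (2 * y))).
Proof.
  intros H; assert (Hn := one_sub_cis_neq0 y H).
  assert (K : RtoC (cot y) * (1 - cis (2 * y)) = - Ci * (cis (2 * y) + 1)).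
  { unfold cis, Cmult, Cplus, Cminus, Copp, Ci, RtoC; simpl.
    rewrite cos_2a_sin, sin_2a; unfold cot.
    assert (Hs : (sin y * sin y + cos y * cos y = 1)%R)
      by (pose proof (sin2_cos2 y); unfold Rsqr in *; lra).
    f_equal; [field; exact H |].
    replace (1 - 2 * sin y * sin y + 1)%R with (2 * cos y * cos y)%R by lra.
    field; exact H. }
  replace (RtoC (cot y)) with (RtoC (cot y) * (1 - cis (2 * y)) / (1 - cis (2 * y)))
    by (field; exact Hn).
  rewrite K; field; exact Hn.
Qed.

Lemma sum_inv_one_sub_cis p x : (1 <= p)%nat -> sin (INR p * x) <> 0%R ->
  (forall j, (j < p)%nat -> sin (x + PI * INR j / INR p) <> 0%R) ->
  csum (fun j => 1 / (1 - cis (2 * (x + PI * INR j / INR p)))) (seq 0 p)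
  = INR p / (1 - cis (2 * (INR p * x))).
Proof.
  intros Hp Hx Hj.
  assert (Hp' : INR p <> 0%R) by (apply not_0_INR; lia).
  set (z j := cis (2 * (x + PI * INR j / INR p))).
  set (W := cis (2 * (INR p * x))).
  assert (HW : 1 - W <> 0) by (apply one_sub_cis_neq0; exact Hx).
  (* The z j are the p-th roots of W: expand 1 / (1 - z j) as a geometric sum and
     sum over j first; only the exponent 0 survives. *)
  assert (Hzp : forall j, z j ^ p = W).
  { intros j; unfold z, W; rewrite cis_pow.
    replace (INR p * (2 * (x + PI * INR j / INR p)))%R
      with (2 * (INR p * x) + 2 * INR j * PI)%R by (field; exact Hp').
    apply cis_period. }
  assert (Hroots : forall k, (0 < k < p)%nat -> csum (fun j => z j ^ k) (seq 0 p) = 0).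
  { intros k Hk.
    set (zeta := cis (2 * (PI * INR k / INR p))).
    rewrite (csum_ext _ (fun j => cis (INR k * (2 * x)) * zeta ^ j)).
    2:{ intros j _; unfold z, zeta; rewrite !cis_pow, <- cis_add; f_equal; field; exact Hp'. }
    rewrite csum_scal, geom_sum_root_of_unity; [ring | |].
    - unfold zeta; rewrite cis_pow.
      replace (INR p * (2 * (PI * INR k / INR p)))%R with (0 + 2 * INR k * PI)%R
        by (field; exact Hp').
      rewrite cis_period; apply cis_0.
    - apply one_sub_cis_neq0, sin_PI_frac_lt_neq0; exact Hk. }
  rewrite (csum_ext _ (fun j => / (1 - W) * csum (Cpow (z j)) (seq 0 p)))
    by (intros j _; apply inv_one_sub_geom_sum; [apply Hzp | exact HW]).
  rewrite csum_scal, (csum_swap (fun j k => z j ^ k)).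
  rewrite (seq_0_cons p Hp) at 1.
  change (csum ?f (?a :: ?l)) with (f a + csum f l).
  rewrite (csum_ext _ (fun _ => 0) (seq 1 (p - 1))).
  2:{ intros k Hk; apply in_seq in Hk; apply Hroots; lia. }
  rewrite (csum_ext _ (fun _ => 1) (seq 0 p)) by reflexivity.
  rewrite !csum_const, !length_seq; unfold Cdiv; ring.
Qed.

Lemma cot_mul_formula p x : (1 <= p)%nat -> sin (INR p * x) <> 0%R ->
  (forall j, (j < p)%nat -> sin (x + PI * INR j / INR p) <> 0%R) ->
  rsum (fun j => cot (x + PI * INR j / INR p)) (seq 0 p) = (INR p * cot (INR p * x))%R.
Proof.
  intros Hp Hx Hj.
  apply RtoC_inj; rewrite RtoC_rsum, RtoC_mult, cot_cis by exact Hx.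
  rewrite (csum_ext _ (fun j => Ci + - (2 * Ci) * (1 / (1 - cis (2 * (x + PI * INR j / INR p)))))).
  2:{ intros j Hin; apply in_seq in Hin.
      assert (Hj' := Hj j ltac:(lia)).
      rewrite cot_cis by exact Hj'.
      assert (H1 := one_sub_cis_neq0 _ Hj'); field; exact H1. }
  rewrite csum_plus, csum_const, length_seq, csum_scal, sum_inv_one_sub_cis by assumption.
  assert (H1 := one_sub_cis_neq0 _ Hx); field; exact H1.
Qed.

End CotangentMultiplication.

Definition sum_cot (B : R -> R) (q : nat) : R :=
  rsum (fun n => B (cot (PI * INR n / INR q))) (seq 1 (q - 1)).

Definition cot_dedekind_sum (G : R -> R) (a b : nat) : R :=
  rsum (fun n => cot (PI * INR n * INR a / INR b) * G (PI * INR n / INR b)) (seq 1 (b - 1)).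

Section Reciprocity.

Variables (G B : R -> R) (E : R -> R -> R).
Hypothesis cot_mul_G : forall t, sin t <> 0 -> cot t * G t = B (cot t).
Hypothesis cot_add_mul_G : forall a b, sin a <> 0 -> sin b <> 0 -> sin (a + b) <> 0 ->
  cot (a + b) * (G a + G b) = E (cot a) (cot b).

Lemma cot_mul_G_expand p x : (1 <= p)%nat -> sin (INR p * x) <> 0 ->
  (forall m, (m < p)%nat -> sin (x + PI * INR m / INR p) <> 0) ->
  INR p * cot (INR p * x) * G x
  = B (cot x) + rsum (fun m => cot (x + PI * INR m / INR p) * G x) (seq 1 (p - 1)).
Proof.
  intros Hp Hpx Hm.
  assert (Hx0 : x + PI * INR 0 / INR p = x) by (simpl; field; apply not_0_INR; lia).
  assert (Hx : sin x <> 0) by (rewrite <- Hx0; apply Hm; lia).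
  rewrite <- cot_mul_formula, seq_0_cons by assumption.
  change (rsum ?f (?a :: ?l)) with (f a + rsum f l); cbv beta.
  rewrite Hx0, Rmult_plus_distr_r, cot_mul_G, Rmult_comm, <- rsum_scal by exact Hx.
  f_equal; apply rsum_ext; intros; ring.
Qed.

Lemma cot_reciprocity p q : (1 <= p)%nat -> (1 <= q)%nat -> Nat.gcd p q = 1%nat ->
  INR p * cot_dedekind_sum G p q + INR q * cot_dedekind_sum G q p
  = sum_cot B q + sum_cot B p + sum_cot (fun u => sum_cot (E u) p) q.
Proof.
  intros Hp Hq Hpq.
  assert (Hqp : Nat.gcd q p = 1%nat) by (rewrite Nat.gcd_comm; exact Hpq).
  assert (Hleft : INR p * cot_dedekind_sum G p q = sum_cot B q +
    rsum (fun n => rsum (fun m =>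
      cot (PI * INR n / INR q + PI * INR m / INR p) * G (PI * INR n / INR q))
      (seq 1 (p - 1))) (seq 1 (q - 1))).
  { unfold cot_dedekind_sum, sum_cot; rewrite <- rsum_scal, <- rsum_plus.
    apply rsum_ext; intros n Hn; apply in_seq in Hn.
    replace (PI * INR n * INR p / INR q) with (INR p * (PI * INR n / INR q))
      by (field; apply not_0_INR; lia).
    rewrite <- Rmult_assoc; apply cot_mul_G_expand; [lia | apply sin_mul_PI_frac_neq0; auto; lia |].
    intros m Hm; apply sin_add_PI_frac_neq0; auto; lia. }
  assert (Hright : INR q * cot_dedekind_sum G q p = sum_cot B p +
    rsum (fun m => rsum (fun n =>
      cot (PI * INR n / INR q + PI * INR m / INR p) * G (PI * INR m / INR p))
      (seq 1 (q - 1))) (seq 1 (p - 1))).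
  { unfold cot_dedekind_sum, sum_cot; rewrite <- rsum_scal, <- rsum_plus.
    apply rsum_ext; intros m Hm; apply in_seq in Hm.
    replace (PI * INR m * INR q / INR p) with (INR q * (PI * INR m / INR p))
      by (field; apply not_0_INR; lia).
    rewrite <- Rmult_assoc, cot_mul_G_expand.
    - f_equal; apply rsum_ext; intros n _; rewrite Rplus_comm; reflexivity.
    - lia.
    - apply sin_mul_PI_frac_neq0; auto; lia.
    - intros n Hn; apply sin_add_PI_frac_neq0; auto; lia. }
  rewrite Hleft, Hright, (rsum_swap (fun m n =>
    cot (PI * INR n / INR q + PI * INR m / INR p) * G (PI * INR m / INR p))).
  match goal with |- _ + ?L + (_ + ?R) = _ =>
    enough (Hcross : L + R = sum_cot (fun u => sum_cot (E u) p) q) by lra end.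
  rewrite <- rsum_plus; apply rsum_ext; intros n Hn; apply in_seq in Hn.
  rewrite <- rsum_plus; apply rsum_ext; intros m Hm; apply in_seq in Hm.
  rewrite <- Rmult_plus_distr_l; apply cot_add_mul_G.
  - apply sin_PI_frac_lt_neq0; lia.
  - apply sin_PI_frac_lt_neq0; lia.
  - apply sin_add_PI_frac_neq0; auto; lia.
Qed.

Lemma cot_dedekind_sum_succ_l p : (1 <= p)%nat -> cot_dedekind_sum G (S p) p = sum_cot B p.
Proof.
  intros Hp; apply rsum_ext; intros m Hm; apply in_seq in Hm.
  replace (PI * INR m * INR (S p) / INR p) with (PI * INR m / INR p + INR m * PI)
    by (rewrite S_INR; field; apply not_0_INR; lia).
  rewrite cot_add_INR_PI; apply cot_mul_G, sin_PI_frac_lt_neq0; lia.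
Qed.

Lemma cot_dedekind_sum_succ_r p : cot_dedekind_sum G p (S p) = - sum_cot B (S p).
Proof.
  unfold cot_dedekind_sum, sum_cot.
  rewrite (rsum_ext _ (fun n => -1 * B (cot (PI * INR n / INR (S p))))), rsum_scal; [ring |].
  intros n Hn; apply in_seq in Hn.
  replace (PI * INR n * INR p / INR (S p)) with (- (PI * INR n / INR (S p)) + INR n * PI)
    by (rewrite S_INR; field; pose proof (pos_INR p); lra).
  rewrite cot_add_INR_PI, cot_opp, <- cot_mul_G by (apply sin_PI_frac_lt_neq0; lia).
  ring.
Qed.

Lemma sum_cot_succ p : (1 <= p)%nat ->
  INR (S p) * sum_cot B (S p)
  = INR p * sum_cot B p - sum_cot (fun u => sum_cot (E u) p) (S p).
Proof.
  intros Hp.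
  assert (Hcop : Nat.gcd p (S p) = 1%nat)
    by (rewrite <- Nat.add_1_l, Nat.gcd_add_diag_r, Nat.gcd_comm; reflexivity).
  pose proof (cot_reciprocity p (S p) Hp ltac:(lia) Hcop) as Hrec.
  rewrite cot_dedekind_sum_succ_r, cot_dedekind_sum_succ_l, S_INR in Hrec by exact Hp.
  rewrite S_INR; lra.
Qed.

End Reciprocity.

Lemma sum_cot_ext B B' q : (forall u, B u = B' u) -> sum_cot B q = sum_cot B' q.
Proof. intros H; apply rsum_ext; intros; apply H. Qed.

Lemma pow_opp_odd x k : Nat.odd k = true -> (- x) ^ k = - x ^ k.
Proof.
  intros Hk; apply Nat.odd_spec in Hk as [j ->].
  replace (- x) with (-1 * x) by ring.
  rewrite Rpow_mult_distr, pow_add, pow_mult.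
  replace ((-1) ^ 2) with 1 by ring; rewrite pow1; ring.
Qed.

Lemma sum_cot_odd_pow k q : Nat.odd k = true -> sum_cot (fun v => v ^ k) q = 0.
Proof.
  intros Hk.
  destruct q as [|q]; [reflexivity |].
  assert (Hrefl := rsum_seq_reflect (fun n => cot (PI * INR n / INR (S q)) ^ k) (S q) q 1
    ltac:(lia)).
  replace (S q + 1 - 1 - q)%nat with 1%nat in Hrefl by lia.
  rewrite (rsum_ext _ (fun n => -1 * cot (PI * INR n / INR (S q)) ^ k)), rsum_scal in Hrefl.
  - unfold sum_cot; replace (S q - 1)%nat with q by lia; lra.
  - intros n Hn; apply in_seq in Hn.
    replace (PI * INR (S q - n) / INR (S q)) with (- (PI * INR n / INR (S q)) + INR 1 * PI)
      by (rewrite minus_INR by lia; change (INR 1) with 1; field; apply not_0_INR; lia).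
    rewrite cot_add_INR_PI, cot_opp, pow_opp_odd by exact Hk; ring.
Qed.

Lemma sum_cot_cubic q c0 c1 c2 c3 :
  sum_cot (fun v => c0 + c1 * v + c2 * v ^ 2 + c3 * v ^ 3) q
  = c0 * INR (q - 1) + c2 * sum_cot (fun v => v ^ 2) q.
Proof.
  assert (H1 := sum_cot_odd_pow 1 q eq_refl).
  assert (H3 := sum_cot_odd_pow 3 q eq_refl).
  unfold sum_cot in *; cbv beta.
  rewrite !rsum_plus, !rsum_scal, rsum_const, length_seq, H3.
  rewrite (rsum_ext _ (fun n => cot (PI * INR n / INR q) ^ 1)), H1 by (intros; ring).
  ring.
Qed.

Lemma cot_add_mul_cot_add a b : sin a <> 0 -> sin b <> 0 -> sin (a + b) <> 0 ->
  cot (a + b) * (cot a + cot b) = cot a * cot b - 1.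
Proof.
  intros Ha Hb Hab; unfold cot; rewrite sin_plus, cos_plus in *; field; auto.
Qed.

Lemma cot_div_sin2 t : sin t <> 0 -> cot t / sin t ^ 2 = cot t * (1 + cot t ^ 2).
Proof.
  intros H; unfold cot.
  assert (Hpyth := sin2_cos2 t); unfold Rsqr in Hpyth.
  transitivity (cos t / sin t / sin t ^ 2 * (sin t * sin t + cos t * cos t));
    [rewrite Hpyth; ring | field; exact H].
Qed.

Lemma cot_mul_cot_div_sin2 t : sin t <> 0 -> cot t * (cot t / sin t ^ 2) = cot t ^ 2 + cot t ^ 4.
Proof. intros H; rewrite cot_div_sin2 by exact H; ring. Qed.

Definition cot_add_quartic (u v : R) : R :=
  u ^ 3 * v + u * v ^ 3 - u ^ 2 * v ^ 2 + 2 * u * v - u ^ 2 - v ^ 2 - 1.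

Lemma cot_add_mul_cot_div_sin2 a b : sin a <> 0 -> sin b <> 0 -> sin (a + b) <> 0 ->
  cot (a + b) * (cot a / sin a ^ 2 + cot b / sin b ^ 2) = cot_add_quartic (cot a) (cot b).
Proof.
  intros Ha Hb Hab; rewrite !cot_div_sin2 by assumption; unfold cot_add_quartic.
  transitivity (cot (a + b) * (cot a + cot b) * (1 + cot a ^ 2 - cot a * cot b + cot b ^ 2));
    [ring |].
  rewrite cot_add_mul_cot_add by assumption; ring.
Qed.

Lemma sum_cot2_bilinear p q :
  sum_cot (fun u => sum_cot (fun v => u * v - 1) p) q = - INR (q - 1) * INR (p - 1).
Proof.
  rewrite (sum_cot_ext _ (fun u => - INR (p - 1) + 0 * u + 0 * u ^ 2 + 0 * u ^ 3)).
  - rewrite sum_cot_cubic; ring.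
  - intros u; rewrite (sum_cot_ext _ (fun v => -1 + u * v + 0 * v ^ 2 + 0 * v ^ 3))
      by (intros; ring).
    rewrite sum_cot_cubic; ring.
Qed.

Lemma sum_cot2_quartic p q :
  sum_cot (fun u => sum_cot (cot_add_quartic u) p) q
  = - (INR (p - 1) + sum_cot (fun v => v ^ 2) p) * (INR (q - 1) + sum_cot (fun v => v ^ 2) q).
Proof.
  set (c := INR (p - 1) + sum_cot (fun v => v ^ 2) p).
  rewrite (sum_cot_ext _ (fun u => - c + 0 * u + - c * u ^ 2 + 0 * u ^ 3)).
  - rewrite sum_cot_cubic; ring.
  - intros u.
    rewrite (sum_cot_ext _ (fun v => (- u ^ 2 - 1) + (u ^ 3 + 2 * u) * v
                                      + (- u ^ 2 - 1) * v ^ 2 + u * v ^ 3))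
      by (intros; unfold cot_add_quartic; ring).
    rewrite sum_cot_cubic; unfold c; ring.
Qed.

Lemma sum_cot_sq q : (1 <= q)%nat -> sum_cot (fun v => v ^ 2) q = (INR q - 1) * (INR q - 2) / 3.
Proof.
  intros Hq; destruct q as [|p]; [lia | clear Hq].
  induction p as [|p IH]; [unfold sum_cot, rsum; simpl; field |].
  assert (Hsq : forall t, sin t <> 0 -> cot t * cot t = cot t ^ 2) by (intros; ring).
  assert (Hrec := sum_cot_succ cot (fun v => v ^ 2) (fun u v => u * v - 1)
    Hsq cot_add_mul_cot_add (S p) ltac:(lia)).
  rewrite sum_cot2_bilinear, IH in Hrec.
  apply Rmult_eq_reg_l with (INR (S (S p))); [| apply not_0_INR; lia].
  rewrite Hrec, !S_INR; replace (S (S p) - 1)%nat with (S p) by lia.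
  replace (S p - 1)%nat with p by lia; rewrite S_INR; field.
Qed.

Lemma sum_cot_sq_add_pow4 q : (1 <= q)%nat ->
  sum_cot (fun v => v ^ 2 + v ^ 4) q = (INR q - 1) * (INR q - 2) * (INR q + 1) * (INR q + 2) / 45.
Proof.
  intros Hq; destruct q as [|p]; [lia | clear Hq].
  induction p as [|p IH]; [unfold sum_cot, rsum; simpl; field |].
  assert (Hrec := sum_cot_succ (fun t => cot t / sin t ^ 2) (fun v => v ^ 2 + v ^ 4)
    cot_add_quartic cot_mul_cot_div_sin2 cot_add_mul_cot_div_sin2 (S p) ltac:(lia)).
  rewrite sum_cot2_quartic, IH, !sum_cot_sq in Hrec by lia.
  apply Rmult_eq_reg_l with (INR (S (S p))); [| apply not_0_INR; lia].
  rewrite Hrec, !S_INR; replace (S (S p) - 1)%nat with (S p) by lia.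
  replace (S p - 1)%nat with p by lia; rewrite !S_INR; field.
Qed.

Lemma T_eq_cot_dedekind_sum a b : T a b = cot_dedekind_sum (fun t => cot t / sin t ^ 2) a b.
Proof. apply rsum_ext; intros; unfold Rdiv; ring. Qed.

Theorem mainTheorem16 (p q : nat) (hp : (2 <= p)%nat) (hq : (2 <= q)%nat)
  (hpq : Nat.gcd p q = 1%nat) :
  45 * INR p * T p q + 45 * INR q * T q p
  = INR p ^ 4 + INR q ^ 4 - 5 * INR p ^ 2 * INR q ^ 2 + 3.
Proof.
  assert (Hrec := cot_reciprocity (fun t => cot t / sin t ^ 2) (fun v => v ^ 2 + v ^ 4)
    cot_add_quartic cot_mul_cot_div_sin2 cot_add_mul_cot_div_sin2 p q ltac:(lia) ltac:(lia) hpq).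
  rewrite sum_cot2_quartic, !sum_cot_sq_add_pow4, !sum_cot_sq, !minus_INR in Hrec by lia.
  rewrite !T_eq_cot_dedekind_sum.
  transitivity (45 * (INR p * cot_dedekind_sum (fun t => cot t / sin t ^ 2) p q
                      + INR q * cot_dedekind_sum (fun t => cot t / sin t ^ 2) q p)); [ring |].
  rewrite Hrec; simpl; field.
Qed.
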